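(* Let $n\ge 1$, let $x_1,\dots,x_n$ be distinct integers each greater than $1$, and let $D=\{1,0,x_1,\dots,x_n\}$. If $(T,s)$ is an optimal signed tree realizing $D$ and $uv$ is the unique edge of $T$ with $s(uv)=-$, then $\deg(u)=\deg(v)=2$.
   Context: A signed tree is a pair $(T,s)$ where $T$ is a finite tree and $s:E(T)\to\{+,-\}$. The signed degree $sdeg(v)$ of a vertex is the number of incident positive edges minus the number of incident negative edges. $(T,s)$ realizes $D$ if $D=\{sdeg(v):v\in V(T)\}$. $\sigma(D)=\min\{|V(T)|: \text{some signed tree }(T,s)\text{ realizes }D\}$, and a signed tree $(T,s)$ realizing $D$ is optimal if $|V(T)|=\sigma(D)$. $\deg$ denotes the ordinary degree in $T$. *)

From mathcomp Require Import all_boot all_order all_algebra.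
Set Implicit Arguments. Unset Strict Implicit. Unset Printing Implicit Defensive.
Import GRing.Theory Num.Theory.

(* A finite simple graph on the vertex set 'I_m is a symmetric irreflexive
   relation e. *)
Definition is_tree (m : nat) (e : rel 'I_m) : Prop :=
  [/\ 0 < m,
      (forall u v, e u v = e v u),
      (forall u, ~~ e u u),
      (forall u v, connect e u v) &
      (forall c : seq 'I_m, uniq c -> 2 < size c -> ~~ cycle e c)].

(* A signed tree: the sign s : rel 'I_m (true = +, false = -) is only
   meaningful on edges, and must be a function of the unordered edge. *)
Definition signed_tree (m : nat) (e s : rel 'I_m) : Prop :=
  is_tree e /\ (forall u v, e u v -> s u v = s v u).

Definition deg (m : nat) (e : rel 'I_m) (v : 'I_m) : nat := #|[set w | e v w]|.

Definition sdeg (m : nat) (e s : rel 'I_m) (v : 'I_m) : int :=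
  (#|[set w | e v w && s v w]|%:Z - #|[set w | e v w && ~~ s v w]|%:Z)%R.

Definition realizes (D : pred int) (m : nat) (e s : rel 'I_m) : Prop :=
  forall d : int, D d <-> exists v : 'I_m, sdeg e s v = d.

Definition optimal (D : pred int) (m : nat) (e s : rel 'I_m) : Prop :=
  [/\ signed_tree e s, realizes D e s &
      forall (m' : nat) (e' s' : rel 'I_m'),
        signed_tree e' s' -> realizes D e' s' -> m <= m'].

From mathcomp Require Import all_boot all_order all_algebra.
From mathcomp Require Import zify.
Set Implicit Arguments. Unset Strict Implicit. Unset Printing Implicit Defensive.
Import Order.TTheory GRing.Theory Num.Theory.

(* Every signed degree lies in D, hence is nonnegative; a vertex off the negative
   edge uv has signed degree equal to its degree, so only u or v can have signed
   degree 0, and then exactly when its degree is 2.  If deg u = deg v = 2 fails,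
   all vertices but one have signed degree >= 1, and distinct vertices attain the
   x_i, so the signed degrees sum to at least x_1 + ... + x_n + (m - n - 1).  On
   the other hand they sum to (sum of degrees) - 4 <= 2m - 6 in a tree on m
   vertices, whence m >= n + 5 + sum (x_i - 2).  But the caterpillar made of the
   path 0 - 1 - ... - (n+3) with negative edge 12 and x_i - 2 leaves attached to
   vertex i + 2 realizes D with n + 4 + sum (x_i - 2) vertices, contradicting
   optimality. *)

Section AcyclicGraph.
Variables (m : nat) (e : rel 'I_m).
Hypothesis e_sym : forall u v, e u v = e v u.
Hypothesis e_irr : forall u, ~~ e u u.
Hypothesis e_acyclic : forall c : seq 'I_m, uniq c -> 2 < size c -> ~~ cycle e c.

Definition deg_in (A : {set 'I_m}) w := #|[set y in A | e w y]|.

Lemma uniq_path_extend (A : {set 'I_m}) (x : 'I_m) (p : seq 'I_m) :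
    (forall w, w \in A -> 2 <= deg_in A w) ->
    x \in A -> all [in A] p -> uniq (x :: p) -> path e x p ->
  exists y, [/\ y \in A, uniq (y :: x :: p) & e y x].
Proof.
move=> deg2 xA pA xp_uniq xp_path.
have neq_x y : e x y -> y != x by apply: contraTneq => ->; exact: e_irr.
case: p pA xp_uniq xp_path => [|p0 p] pA xp_uniq xp_path.
  have : 0 < deg_in A x by apply: leq_trans (deg2 x xA).
  rewrite card_gt0 => /set0Pn [y]; rewrite inE => /andP [yA exy].
  exists y; split=> //; last by rewrite e_sym.
  by rewrite /= inE andbT neq_x.
have : 0 < #|[set y in A | e x y] :\ p0|.
  by move: (deg2 x xA); rewrite /deg_in (cardsD1 p0); case: (p0 \in _) => // /ltnW.
rewrite card_gt0 => /set0Pn [y]; rewrite !inE => /and3P [yp0 yA exy].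
exists y; split=> //; last by rewrite e_sym.
have yNp : y \notin p.
  apply/negP => yp; case/splitPr: yp xp_uniq xp_path => p1 p2 xp_uniq xp_path.
  have c_uniq : uniq (x :: p0 :: rcons p1 y).
    by move: xp_uniq; rewrite -cat_rcons -!cat_cons cat_uniq => /andP [].
  have c_size : 2 < size (x :: p0 :: rcons p1 y) by rewrite /= size_rcons.
  have/negP := e_acyclic c_uniq c_size; apply.
  rewrite /cycle rcons_path /= last_rcons (e_sym y x) exy andbT.
  by move: xp_path; rewrite -cat_rcons -!cat_cons cat_path => /andP [].
by move: xp_uniq; rewrite /= !inE (negbTE yp0) (negbTE yNp) (negbTE (neq_x y exy)) => ->.
Qed.

(* Otherwise uniq paths inside A could be extended forever. *)
Lemma deg_in_le1_exists (A : {set 'I_m}) : A != set0 ->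
  exists2 w, w \in A & deg_in A w <= 1.
Proof.
move=> /set0Pn [x0 x0A].
case: (boolP [exists w in A, deg_in A w <= 1]) => [/exists_inP [w ? ?]|]; first by exists w.
rewrite negb_exists_in => /forall_inP deg2.
have {}deg2 w : w \in A -> 2 <= deg_in A w by move/deg2; rewrite -ltnNge.
have long_path k : exists x p,
    [/\ x \in A, all [in A] p, uniq (x :: p), path e x p & size p = k].
  elim: k => [|k [x [p [xA pA xp_uniq xp_path <-]]]]; first by exists x0, [::].
  have [y [yA yxp_uniq eyx]] := uniq_path_extend deg2 xA pA xp_uniq xp_path.
  by exists y, (x :: p); rewrite /= xA pA eyx.
have [x [p [_ _ xp_uniq _ size_p]]] := long_path m.
have := max_card (mem (x :: p)).
by rewrite (card_uniqP xp_uniq) card_ord /= size_p ltnn.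
Qed.

Lemma sum_deg_in_acyclic (A : {set 'I_m}) :
  \sum_(w in A) deg_in A w <= (#|A|.-1).*2.
Proof.
move: {2}#|A| (erefl #|A|) => k; elim: k A => [|k IH] A cardA.
  by move/eqP: cardA; rewrite cards_eq0 => /eqP ->; rewrite big_set0.
have [|w wA w_le1] := deg_in_le1_exists (A := A).
  by rewrite -card_gt0 cardA.
set B := A :\ w.
have cardB : #|B| = k by move: cardA; rewrite (cardsD1 w) wA => -[].
have degBw : deg_in A w = \sum_(y in B) e y w.
  rewrite -big_mkcondr /= sum1_card; apply: eq_card => y.
  rewrite inE [in RHS]unfold_in /= !inE e_sym; case: eqVneq => [->|//].
  by rewrite (negbTE (e_irr w)) andbF.
have degB y : y \in B -> deg_in A y = deg_in B y + e y w.
  move=> yB; rewrite /deg_in (cardsD1 w [set z in A | e y z]) addnC !inE wA.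
  by congr (_ + _); apply: eq_card => z; rewrite !inE andbA.
have w_leB : deg_in A w <= #|B|.
  by rewrite degBw -sum1_card leq_sum // => y _; case: (e y w).
rewrite (big_setD1 w wA) (eq_bigr _ degB) big_split /= -degBw.
have := IH B cardB; rewrite cardA; set S := \sum_(i in B) deg_in B i.
lia.
Qed.

End AcyclicGraph.

Lemma tree_sum_deg m (e : rel 'I_m) : is_tree e -> \sum_w deg e w + 2 <= m.*2.
Proof.
case=> m_gt0 e_sym e_irr _ e_acyclic.
have deg_inT w : deg_in e [set: 'I_m] w = deg e w.
  by apply: eq_card => y; rewrite !inE.
have := sum_deg_in_acyclic e_sym e_irr e_acyclic [set: 'I_m].
rewrite cardsT card_ord (eq_bigl (fun=> true) _ (@in_setT _)).
rewrite (eq_bigr _ (fun w _ => deg_inT w)); set S := \sum_(w < m) _; lia.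
Qed.

Section ParentTree.
Variable ps : seq nat.
Hypothesis ps_le : forall j, nth 0 ps j <= j.
Local Notation N := (size ps).+1.
Local Notation parent a := (nth 0 ps a.-1).

(* Vertex [a > 0] hangs from [ps`_(a - 1)]; vertex [0] is the root. *)
Definition parent_rel : rel 'I_N :=
  fun a b => ((0 < a) && (parent a == b)) || ((0 < b) && (parent b == a)).

Lemma parent_lt (a : 'I_N) : 0 < a -> parent a < a.
Proof.
by move=> a_gt0; have := ps_le a.-1; lia.
Qed.

Lemma parent_rel_sym a b : parent_rel a b = parent_rel b a.
Proof. by rewrite /parent_rel orbC. Qed.

Lemma parent_rel_irr a : ~~ parent_rel a a.
Proof.
rewrite /parent_rel orbb; apply/andP => -[a_gt0 /eqP pa].
by have := parent_lt a_gt0; rewrite pa ltnn.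
Qed.

Lemma parent_rel_gtE (a b : 'I_N) : b < a -> parent_rel a b = (0 < a) && (parent a == b).
Proof.
move=> ba; rewrite /parent_rel; case: (boolP (0 < b)) => /= b_gt0; last by rewrite orbF.
suff -> : (parent b == a) = false by rewrite orbF.
by apply/negbTE; rewrite neq_ltn (ltn_trans (parent_lt b_gt0) ba).
Qed.

Lemma connect_parent_rel0 (a : 'I_N) : connect parent_rel a ord0.
Proof.
elim: {a}(a : nat) {-2}a (leqnn a) => [|k IH] a a_le.
  by have -> : a = ord0 by apply: val_inj => /=; lia.
case: (posnP a) => [a0|a_gt0]; first by have -> : a = ord0 by exact: val_inj.
have pa_lt := parent_lt a_gt0.
have pa_N : parent a < N by apply: ltn_trans pa_lt _.
apply: (connect_trans (y := Ordinal pa_N)); last by apply: IH => /=; lia.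
by apply: connect1; rewrite /parent_rel a_gt0 /= eqxx.
Qed.

(* A maximal vertex of a cycle would have both cycle neighbours as parent. *)
Lemma parent_rel_acyclic (c : seq 'I_N) :
  uniq c -> 2 < size c -> ~~ cycle parent_rel c.
Proof.
move=> c_uniq c_size; apply/negP => c_cycle.
have [x0 x0c] : exists x0, x0 \in c.
  by case: c c_size {c_uniq c_cycle} => // a c _; exists a; exact: mem_head.
have [x xc x_max] := @arg_maxnP _ x0 (mem c) val x0c.
have [i c' c_rot] := rot_to xc.
have xc'_uniq : uniq (x :: c') by rewrite -c_rot rot_uniq.
have lt_x y : y \in c' -> y < x.
  move=> yc'; have yc : y \in c by rewrite -(mem_rot i) c_rot inE yc' orbT.
  rewrite ltn_neqAle (x_max y yc : y <= x) andbT.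
  apply: contraTneq yc' => /val_inj ->; by case/andP: xc'_uniq.
move: c_rot xc'_uniq lt_x; rewrite -(size_rot i) -(rot_cycle i) in c_size c_cycle.
case: c' => [|y c'] c_rot; first by rewrite c_rot in c_size.
case/lastP: c' c_rot => [|q z] c_rot; first by rewrite c_rot in c_size.
move=> xc'_uniq lt_x; move: c_cycle; rewrite c_rot /cycle /= rcons_path last_rcons.
case/and3P => /= exy _ ezx.
rewrite parent_rel_gtE ?lt_x ?mem_head // in exy.
have zc' : z \in y :: rcons q z by rewrite inE mem_rcons mem_head orbT.
rewrite parent_rel_sym parent_rel_gtE ?lt_x // in ezx.
case/andP: exy => _ /eqP pxy; case/andP: ezx => _ /eqP pxz.
have yz : y = z by apply: val_inj; rewrite /= -pxy -pxz.
by move: xc'_uniq; rewrite /= yz mem_rcons mem_head andbF.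
Qed.

Lemma parent_rel_tree : is_tree parent_rel.
Proof.
split=> //; [exact: parent_rel_sym | exact: parent_rel_irr | | exact: parent_rel_acyclic].
move=> a b; apply: connect_trans (connect_parent_rel0 a) _.
by rewrite (sym_connect_sym parent_rel_sym); exact: connect_parent_rel0.
Qed.

Lemma deg_parent_rel (w : 'I_N) : deg parent_rel w = (0 < w) + count_mem (val w) ps.
Proof.
have split_rel y : (parent_rel w y : nat) =
    ((0 < w) && (parent w == y)) + ((0 < y) && (parent y == w)).
  rewrite /parent_rel; case: (boolP (_ && _)) => [/andP [w_gt0 /eqP pw]|] //=.
  case: (boolP (_ && _)) => [/andP [y_gt0 /eqP py]|] //.
  by have := parent_lt w_gt0; have := parent_lt y_gt0; rewrite pw py; lia.
rewrite /deg -sum1_card big_mkcond /=.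
rewrite (eq_bigr (fun y => nat_of_bool (parent_rel w y))) => [|y _]; last by rewrite inE.
under eq_bigr => y _ do rewrite split_rel.
rewrite big_split /=; congr (_ + _).
  case: (posnP w) => [w0|w_gt0]; first by rewrite big1 // => y _; rewrite w0.
  have pw_N : parent w < N by apply: ltn_trans (parent_lt w_gt0) _.
  rewrite (bigD1 (Ordinal pw_N)) //= eqxx big1 // => y /eqP y_pw.
  by case: eqP => // pw; case: y_pw; exact: val_inj.
rewrite big_ord_recl /= add0n -sum1_count (big_nth 0) big_mkord [RHS]big_mkcond.
by apply: eq_bigr => i _ /=; case: (nth 0 ps i == w).
Qed.

End ParentTree.

Definition neg_deg m (e s : rel 'I_m) (w : 'I_m) := #|[set y | e w y && ~~ s w y]|.

Lemma sdeg_neg_deg m (e s : rel 'I_m) w :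
  sdeg e s w = ((deg e w)%:Z - 2 * (neg_deg e s w)%:Z)%R.
Proof.
have -> : deg e w = #|[set y | e w y && s w y]| + neg_deg e s w.
  rewrite /deg -(cardsID [set y | s w y]).
  by congr (_ + _); apply: eq_card => y; rewrite !inE // andbC.
by rewrite /sdeg /neg_deg; lia.
Qed.

Section Caterpillar.
Variables (n : nat) (k : 'I_n -> nat).

(* A path [0 - 1 - ... - n+3] with [k i] leaves hanging from vertex [i + 3]. *)
Definition leaf_parents := flatten [seq nseq (k i) (i + 3) | i <- enum 'I_n].
Definition caterpillar_parents := iota 0 (n + 3) ++ leaf_parents.
Local Notation N := (size caterpillar_parents).+1.

Lemma leaf_parents_lt t : t \in leaf_parents -> t < n + 3.
Proof.
case/flattenP => _ /mapP [i _ ->]; rewrite mem_nseq => /andP [_ /eqP ->].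
by rewrite ltn_add2r.
Qed.

Lemma caterpillar_parents_le j : nth 0 caterpillar_parents j <= j.
Proof.
rewrite nth_cat size_iota; case: ltnP => [j_lt|j_ge]; first by rewrite nth_iota.
case: (ltnP (j - (n + 3)) (size leaf_parents)) => [lt_size|ge_size].
  exact: leq_trans (ltnW (leaf_parents_lt (mem_nth 0 lt_size))) j_ge.
by rewrite nth_default.
Qed.

Lemma count_leaf_parents w : count_mem w leaf_parents = \sum_(i < n) (i + 3 == w) * k i.
Proof.
rewrite count_flatten -map_comp sumnE big_map big_enum /=.
by apply: eq_bigr => i _; rewrite count_nseq.
Qed.

Lemma size_caterpillar_parents : size caterpillar_parents = n + 3 + \sum_(i < n) k i.
Proof.
rewrite size_cat size_iota size_flatten /shape -map_comp sumnE big_map big_enum /=.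
by congr (_ + _); apply: eq_bigr => i _; rewrite size_nseq.
Qed.

Definition caterpillar : rel 'I_N := @parent_rel caterpillar_parents.

(* The product of two naturals is [2] only for [{1, 2}], the unique negative edge. *)
Definition caterpillar_sign : rel 'I_N := fun a b => a * b != 2.

Lemma caterpillar_signed_tree : signed_tree caterpillar caterpillar_sign.
Proof.
split; first exact: parent_rel_tree caterpillar_parents_le.
by move=> a b _; rewrite /caterpillar_sign mulnC.
Qed.

Lemma deg_caterpillar w :
  deg caterpillar w = (0 < w) + (w < n + 3) + \sum_(i < n) (i + 3 == w) * k i.
Proof.
rewrite deg_parent_rel; last exact: caterpillar_parents_le.
by rewrite count_cat count_uniq_mem ?iota_uniq // mem_iota count_leaf_parents addnA.
Qed.

Lemma neg_deg_caterpillar w :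
  neg_deg caterpillar caterpillar_sign w = (w == 1 :> nat) || (w == 2 :> nat).
Proof.
have N_gt3 : 3 < N by rewrite size_caterpillar_parents; lia.
have w12 y : w * y = 2 -> (w == 1 :> nat) || (w == 2 :> nat).
  move=> wy; have w_gt0 : 0 < w by case: (w : nat) wy.
  have : w <= 2 by apply: dvdn_leq => //; rewrite -wy dvdn_mulr.
  by lia.
rewrite /neg_deg /caterpillar_sign; case: (boolP (_ || _)) => w_12 /=; last first.
  apply: eq_card0 => y; rewrite !inE negbK.
  by apply/negbTE; apply: contra w_12 => /andP [_ /eqP /w12].
have t_lt : 3 - w < N by lia.
apply: (@eq_card1 _ (Ordinal t_lt)) => y; rewrite !inE negbK.
apply/idP/eqP => [/andP [_ /eqP wy]|->].
  by apply: val_inj => /=; move: (w12 _ wy); nia.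
have parent2 : nth 0 caterpillar_parents 1 = 1.
  by rewrite nth_cat size_iota ifT ?nth_iota //; lia.
rewrite /caterpillar /parent_rel /=.
by case/orP: w_12 => /eqP ->; rewrite /= parent2 ?orbT.
Qed.

Lemma sum_spine_out w : (w < 3) || (n + 3 <= w) -> \sum_(i < n) (i + 3 == w) * k i = 0.
Proof.
move=> w_out; rewrite big1 // => i _; case: eqP => // w_eq.
by have := ltn_ord i; move: w_out; rewrite -w_eq; lia.
Qed.

Lemma sum_spine (j : 'I_n) : \sum_(i < n) (i + 3 == j + 3) * k i = k j.
Proof.
rewrite (bigD1 j) //= eqxx mul1n big1 ?addn0 // => i /negPf ij.
by rewrite eqn_add2r val_eqE ij.
Qed.

Local Notation sdeg_cat := (sdeg caterpillar caterpillar_sign).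

Lemma sdeg_caterpillar_end (w : 'I_N) :
  (w == 0 :> nat) || (n + 3 <= w) -> sdeg_cat w = 1%R.
Proof.
move=> w_end; rewrite sdeg_neg_deg deg_caterpillar neg_deg_caterpillar.
rewrite sum_spine_out; last by lia.
by move: w_end; case: (w : nat) => [|[|[|w']]] /=; lia.
Qed.

Lemma sdeg_caterpillar_neg (w : 'I_N) :
  (w == 1 :> nat) || (w == 2 :> nat) -> sdeg_cat w = 0%R.
Proof.
move=> w_12; rewrite sdeg_neg_deg deg_caterpillar neg_deg_caterpillar.
rewrite sum_spine_out; last by lia.
by rewrite w_12; move: w_12; case: (w : nat) => [|[|[|w']]] /=; lia.
Qed.

Lemma sdeg_caterpillar_spine (i : 'I_n) (w : 'I_N) :
  w = i + 3 :> nat -> sdeg_cat w = (k i + 2)%N.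
Proof.
move=> w_eq; rewrite sdeg_neg_deg deg_caterpillar neg_deg_caterpillar w_eq sum_spine.
by have := ltn_ord i; lia.
Qed.

Definition caterpillar_sdegs : seq int :=
  (1 :: 0 :: [seq (k i + 2)%N%:Z | i <- enum 'I_n])%R.

Lemma caterpillar_realizes : realizes (mem caterpillar_sdegs) caterpillar caterpillar_sign.
Proof.
have lt_N j : j <= n + 3 -> j < N by rewrite size_caterpillar_parents; lia.
move=> d; split.
  rewrite !inE => /or3P [/eqP ->|/eqP ->|/mapP [i _ ->]].
  - by exists ord0; rewrite sdeg_caterpillar_end.
  - exists (inord 1); rewrite sdeg_caterpillar_neg // inordK //.
    by apply: lt_N; lia.
  - exists (inord (i + 3)); apply: sdeg_caterpillar_spine.
    by rewrite inordK // lt_N // leq_add2r ltnW.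
case=> w <-; rewrite !inE.
case: (ltnP w 3) => [w_lt3|w_ge3].
  case: (boolP ((w == 1 :> nat) || (w == 2 :> nat))) => w_12.
    by rewrite sdeg_caterpillar_neg ?eqxx ?orbT.
  by rewrite sdeg_caterpillar_end ?eqxx //; lia.
case: (ltnP w (n + 3)) => [w_lt|w_ge]; last first.
  by rewrite sdeg_caterpillar_end ?w_ge ?orbT.
have i_lt : w - 3 < n by lia.
rewrite (sdeg_caterpillar_spine (i := Ordinal i_lt)) /=; last by lia.
by apply/or3P; constructor 3; apply: map_f; rewrite mem_enum.
Qed.

End Caterpillar.

Lemma sum_attained_le_sum (T : finType) (f : T -> int) n (x : 'I_n -> int) (z : T) :
    injective x -> (forall i, exists w, f w = x i) ->
    (0 <= f z)%R -> (forall w, w != z -> 0 < f w)%R ->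
  (\sum_i x i + #|T|%:Z <= \sum_w f w + n%:Z + 1)%R.
Proof.
move=> x_inj attained fz_ge0 f_gt0.
have [g fg] := fin_all_exists attained.
have g_inj : injective g by move=> i j gij; apply: x_inj; rewrite -!fg gij.
pose h w := (f w - 1 + (w == z)%:R)%R.
have h_ge0 w : (0 <= h w)%R.
  rewrite /h; case: eqVneq => [->|/f_gt0]; lia.
have sum_ind : (\sum_w ((w == z)%:R : int) = 1)%R.
  by rewrite (bigD1 z) //= eqxx big1 ?addr0 // => w /negPf ->.
have sum_h : (\sum_w h w = \sum_w f w - #|T|%:Z + 1)%R.
  by rewrite !big_split /= sumrN sumr_const sum_ind natz.
have : (\sum_i (x i - 1) <= \sum_w h w)%R.
  rewrite (eq_bigr (fun i => f (g i) - 1)%R) => [|i _]; last by rewrite fg.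
  apply: (@le_trans _ _ (\sum_i h (g i))%R).
    by apply: ler_sum => i _; rewrite /h; case: (_ == _); lia.
  rewrite (bigID (mem [set g i | i : 'I_n])) /= -big_imset; last exact: in2W.
  by rewrite lerDl; apply: sumr_ge0 => w _; exact: h_ge0.
rewrite sum_h sumrB sumr_const card_ord natz.
set X := (\sum_i x i)%R; set F := (\sum_w f w)%R; lia.
Qed.

Section UniqueNegativeEdge.
Variables (m : nat) (e s : rel 'I_m) (u v : 'I_m).
Hypothesis e_tree : is_tree e.
Hypothesis s_sym : forall a b, e a b -> s a b = s b a.
Hypothesis uv_edge : e u v.
Hypothesis uv_neg : ~~ s u v.
Hypothesis neg_uv : forall a b : 'I_m, e a b -> ~~ s a b ->
  ((a == u) && (b == v)) || ((a == v) && (b == u)).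
Local Notation sdeg := (sdeg e s).

Let e_sym : forall a b, e a b = e b a. Proof. by case: e_tree. Qed.
Let u_neq_v : u != v. Proof. by apply: contraTneq uv_edge => ->; case: e_tree. Qed.

Lemma neg_edgeE a b : e a b && ~~ s a b = ((a == u) && (b == v)) || ((a == v) && (b == u)).
Proof.
apply/idP/idP => [/andP [] /neg_uv //|/orP [] /andP [/eqP -> /eqP ->]].
  by rewrite uv_edge.
by rewrite e_sym uv_edge -s_sym.
Qed.

Lemma neg_degE w : neg_deg e s w = (w == u) + (w == v).
Proof.
transitivity #|[set y | ((w == u) && (y == v)) || ((w == v) && (y == u))]|.
  by apply: eq_card => y; rewrite !inE neg_edgeE.
case: (eqVneq w u) => [->|_].
  by rewrite (negPf u_neq_v); apply: (@eq_card1 _ v) => y; rewrite !inE orbF.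
case: (eqVneq w v) => _; first by apply: (@eq_card1 _ u) => y; rewrite !inE.
by apply: eq_card0 => y; rewrite !inE.
Qed.

Lemma deg_gt0 w : 0 < deg e w.
Proof.
have [t t_w] : exists t, t != w.
  by case: (eqVneq w u) => [->|w_u]; [exists v | exists u]; rewrite eq_sym.
case: e_tree => _ _ _ /(_ w t) /connectP [[|y p] /= wt_path t_last] _.
  by rewrite t_last eqxx in t_w.
by case/andP: wt_path => ewy _; rewrite /deg card_gt0; apply/set0Pn; exists y; rewrite inE.
Qed.

Lemma sum_sdeg_le : (\sum_w sdeg w + 6 <= (2 * m)%N%:Z)%R.
Proof.
have sum_eq1 a : \sum_w (w == a : nat) = 1.
  by rewrite (bigD1 a) //= eqxx big1 // => w /negPf ->.
have sum_neg : \sum_w neg_deg e s w = 2.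
  by rewrite (eq_bigr _ (fun w _ => neg_degE w)) big_split /= !sum_eq1.
under eq_bigr => w _ do rewrite sdeg_neg_deg.
rewrite sumrB -mulr_sumr -!(big_morph Posz PoszD (erefl _)) sum_neg.
have := tree_sum_deg e_tree; set D := \sum_w deg e w; lia.
Qed.

Lemma sdeg_eq0 w : sdeg w = 0%R -> ((w == u) || (w == v)) && (deg e w == 2).
Proof.
rewrite sdeg_neg_deg neg_degE; have := deg_gt0 w.
case: (eqVneq w u) => [->|_]; first by rewrite (negPf u_neq_v) /=; lia.
by case: (eqVneq w v) => [->|_] /=; lia.
Qed.

Lemma sdeg_gt0_but_one : (forall w, 0 <= sdeg w)%R ->
    ~~ ((deg e u == 2) && (deg e v == 2)) ->
  exists z, forall w, w != z -> (0 < sdeg w)%R.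
Proof.
move=> sdeg_ge0 not_deg2.
have [z z_other] : exists z, forall w, w != z -> (w == u) || (w == v) -> deg e w != 2.
  case: (eqVneq (deg e u) 2) => [du|du]; [exists u | exists v] => w w_z /orP [] /eqP w_eq;
    by move: w_z not_deg2; rewrite w_eq ?eqxx ?du //= eq_sym (negPf u_neq_v).
exists z => w w_z; rewrite lt0r sdeg_ge0 andbT; apply/eqP => /sdeg_eq0 /andP [w_uv /eqP].
exact/eqP/z_other.
Qed.

Lemma tree_size_lower_bound n (x : 'I_n -> int) :
    injective x -> (forall i, exists w, sdeg w = x i) -> (forall w, 0 <= sdeg w)%R ->
    ~~ ((deg e u == 2) && (deg e v == 2)) ->
  (\sum_i x i + 5 <= (m + n)%N%:Z)%R.
Proof.
move=> x_inj attained sdeg_ge0 not_deg2.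
have [z z_min] := sdeg_gt0_but_one sdeg_ge0 not_deg2.
have := sum_attained_le_sum x_inj attained (sdeg_ge0 z) z_min.
have := sum_sdeg_le; rewrite card_ord.
set X := (\sum_i x i)%R; set S := (\sum_w sdeg w)%R; lia.
Qed.

End UniqueNegativeEdge.

Theorem mainTheorem11 (n : nat) (x : 'I_n -> int)
  (hn : 1 <= n) (hinj : injective x) (hx : forall i, (1 < x i)%R)
  (m : nat) (e s : rel 'I_m)
  (hopt : optimal (fun d : int => (d \in (1%R :: 0%R :: [seq x i | i <- enum 'I_n]))) e s)
  (u v : 'I_m) (huv : e u v) (hneg : ~~ s u v)
  (huniq : forall a b : 'I_m, e a b -> ~~ s a b ->
            ((a == u) && (b == v)) || ((a == v) && (b == u))) :
  deg e u = 2 /\ deg e v = 2.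
Proof.
pose k i := `|x i - 2|%N.
have x_k i : x i = ((k i + 2)%N%:Z)%R by have := hx i; rewrite /k; lia.
rewrite (eq_map x_k) in hopt; case: hopt => -[e_tree s_sym] realized minimal.
have m_le : m <= n + 4 + \sum_(i < n) k i.
  have := minimal _ _ _ (caterpillar_signed_tree k) (caterpillar_realizes k).
  by rewrite size_caterpillar_parents; lia.
have sdeg_ge0 w : (0 <= sdeg e s w)%R.
  have := (realized (sdeg e s w)).2 (ex_intro _ w erefl).
  by rewrite !inE => /or3P [/eqP ->|/eqP ->|/mapP [i _ ->]].
have attained i : exists w, sdeg e s w = x i.
  by apply/realized; rewrite x_k !inE map_f ?mem_enum ?orbT.
have sum_x : (\sum_i x i = (\sum_(i < n) k i + 2 * n)%N%:Z)%R.
  rewrite (eq_bigr _ (fun i _ => x_k i)) -(big_morph Posz PoszD (erefl _)).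
  by rewrite big_split sum_nat_const card_ord muln2 mul2n.
suff /andP [/eqP -> /eqP ->] : (deg e u == 2) && (deg e v == 2) by [].
apply/negPn/negP => not_deg2.
have := tree_size_lower_bound e_tree s_sym huv hneg huniq hinj attained sdeg_ge0 not_deg2.
by rewrite sum_x; lia.
Qed.
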